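(* Let $1\le r\le n$, let $(z^1,\dots,z^n)$ be any random vector in $[r]^n$, and let $p,q\in[0,1]$. Let $\mathcal G$ be the random graph on $[n]$ in which, conditionally on $(z^1,\dots,z^n)$, each edge $\{i,j\}$ ($i\ne j$) is present independently with probability $p\,\mathbb 1\{z^i=z^j\}+q\,\mathbb 1\{z^i\ne z^j\}$. Then $\mathcal B(\mathcal G)\le n\log r$.
   Context: A random graph $\mathcal G$ on $[n]$ is identified with the random vector of edge indicators $(e^{ij})_{1\le i<j\le n}\in\{0,1\}^{\binom n2}$. For a random vector $x=(x^1,\dots,x^m)$ on a finite product set, the dual total correlation is $\mathcal B(x)=\mathcal H(x)-\sum_{i=1}^m\mathcal H(x^i\mid x^{-i})$, with $\mathcal H$ Shannon entropy and $x^{-i}$ the vector with coordinate $i$ removed. *)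

From HB Require Import structures.
From mathcomp Require Import all_boot all_order all_algebra.
From mathcomp Require Import reals exp.
Set Implicit Arguments. Unset Strict Implicit. Unset Printing Implicit Defensive.
Import Order.TTheory GRing.Theory Num.Theory.
Local Open Scope ring_scope.

Section Entropy.
Variable R : realType.

Definition xlnx (x : R) : R := if x == 0 then 0 else x * ln x.

Definition pr (Omega T : finType) (P : Omega -> R) (X : Omega -> T) (t : T) : R :=
  \sum_(w : Omega | X w == t) P w.

Definition entropy (Omega T : finType) (P : Omega -> R) (X : Omega -> T) : R :=
  - \sum_(t : T) xlnx (pr P X t).

Definition condEntropy (Omega T U : finType) (P : Omega -> R)
  (X : Omega -> T) (Y : Omega -> U) : R :=
  entropy P (fun w => (X w, Y w)) - entropy P Y.

Definition dropc (I V : finType) (i : I) (x : {ffun I -> V}) :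
  {ffun {j : I | j != i} -> V} := [ffun j => x (val j)].

Definition dtc (I V : finType) (P : {ffun I -> V} -> R) : R :=
  entropy P id - \sum_(i : I) condEntropy P (fun x => x i) (dropc i).

End Entropy.

Definition edge (n : nat) : finType := {e : 'I_n * 'I_n | (e.1 < e.2)%N}.

(* Law of the graph G (edge-indicator vector) given the law mu of the
   label vector z in [r]^n: conditionally on z, the edges are independent,
   edge {i,j} present with probability p if z_i = z_j and q otherwise. *)
Definition sbm_law (R : realType) (n r : nat) (mu : {ffun 'I_n -> 'I_r} -> R)
  (p q : R) (g : {ffun edge n -> bool}) : R :=
  \sum_(z : {ffun 'I_n -> 'I_r}) mu z *
    \prod_(e : edge n)
      (let pe := if z (val e).1 == z (val e).2 then p else q in
       if g e then pe else 1 - pe).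

(* Let the labels z and the graph x be jointly distributed, x being a mixture of
   product laws indexed by z.  Then
     B(x) = H(x) - sum_i H(x^i | x^-i)
          <= H(x, z) - sum_i H(x^i | x^-i, z)      (H(x) <= H(x, z), conditioning)
          =  H(z) + sum_i H(x^i | z) - sum_i H(x^i | z) = H(z) <= n ln r,
   the equality coming from conditional independence of the coordinates of x
   given z.  The conditioning step and the bound H(z) <= ln (r ^ n) are
   instances of Gibbs' inequality sum a ln (b / a) <= sum b - sum a. *)

From HB Require Import structures.
From mathcomp Require Import all_boot all_order all_algebra.
From mathcomp Require Import reals exp.
From mathcomp Require Import ring lra.
Set Implicit Arguments. Unset Strict Implicit. Unset Printing Implicit Defensive.
Import Order.TTheory GRing.Theory Num.Theory.
Local Open Scope ring_scope.

Section Gibbs.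
Variable R : realType.

Lemma ln_le_subr1 (x : R) : 0 < x -> ln x <= x - 1.
Proof.
by move=> x0; have := @le_ln1Dx R (x - 1); rewrite addrCA subrr addr0; apply; lra.
Qed.

Lemma ln_prod (I : finType) (f : I -> R) :
  (forall i, 0 < f i) -> ln (\prod_i f i) = \sum_i ln (f i).
Proof.
move=> f0; suff [] : 0 < \prod_i f i /\ ln (\prod_i f i) = \sum_i ln (f i) by [].
apply: (big_rec2 (fun a b => 0 < a /\ ln a = b)) => [|i a b _ [a0 <-]].
  by rewrite ln1.
by split; [rewrite mulr_gt0 | rewrite lnM // posrE].
Qed.

Lemma mulr_lnB_le (a b : R) :
  0 <= a -> 0 <= b -> (0 < a -> 0 < b) -> a * (ln b - ln a) <= b - a.
Proof.
move=> a0 b0 ab; have [->|an0] := eqVneq a 0; first by rewrite mul0r subr0.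
have ap : 0 < a by rewrite lt_neqAle eq_sym an0.
have bp := ab ap.
have := ler_wpM2l a0 (ln_le_subr1 (divr_gt0 bp ap)).
rewrite ln_div ?posrE // => h; apply: le_trans h _.
by rewrite mulrBr mulr1 mulrCA mulfV ?mulr1 // lt0r_neq0.
Qed.

Lemma gibbs_ineq (I : finType) (a b : I -> R) :
  (forall i, 0 <= a i) -> (forall i, 0 <= b i) -> (forall i, 0 < a i -> 0 < b i) ->
  \sum_i a i * (ln (b i) - ln (a i)) <= \sum_i b i - \sum_i a i.
Proof.
move=> a0 b0 ab; rewrite -sumrB; apply: ler_sum => i _.
exact: mulr_lnB_le (a0 i) (b0 i) (ab i).
Qed.

End Gibbs.

Lemma sum_prod_ffun (R : comPzSemiRingType) (I V : finType) (f : I -> V -> R) :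
  (forall i, \sum_v f i v = 1) -> \sum_(x : {ffun I -> V}) \prod_i f i (x i) = 1.
Proof. by move=> f1; rewrite -bigA_distr_bigA big1. Qed.

Section Entropy.
Variables (R : realType) (Omega T : finType) (P : Omega -> R).

Lemma sum_pr (X : Omega -> T) : \sum_t pr P X t = \sum_w P w.
Proof. by rewrite [RHS](partition_big X predT). Qed.

Lemma sum_mul_pr (X : Omega -> T) (G : T -> R) :
  \sum_w P w * G (X w) = \sum_t pr P X t * G t.
Proof.
rewrite (partition_big X predT) //=; apply: eq_bigr => t _.
by rewrite /pr mulr_suml; apply: eq_bigr => w /eqP ->.
Qed.

Lemma entropyE (X : Omega -> T) : entropy P X = - \sum_w P w * ln (pr P X (X w)).
Proof.
rewrite /entropy (sum_mul_pr X (fun t => ln (pr P X t))); congr (- _).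
by apply: eq_bigr => t _; rewrite /xlnx; case: eqP => [->|]; rewrite ?mul0r.
Qed.

Lemma pr_inj (X : Omega -> T) : injective X -> forall w, pr P X (X w) = P w.
Proof.
by move=> Xinj w; rewrite /pr (big_pred1 w) // => w'; apply/eqP/eqP => [/Xinj|->].
Qed.

Lemma entropy_le_ln_card (X : Omega -> T) :
  (forall w, 0 <= P w) -> \sum_w P w = 1 -> entropy P X <= ln #|T|%:R.
Proof.
move=> P0 P1; set N : R := #|T|%:R.
have pr0 t : 0 <= pr P X t by apply: sumr_ge0.
have N0 : 0 < N.
  rewrite ltr0n; apply/card_gt0P; case: (pickP (fun w : Omega => true)) => [w _|Omega0].
    by exists (X w).
  by move: P1; rewrite big_pred0 // => /eqP; rewrite eq_sym oner_eq0.
have Ninv0 : 0 < N^-1 by rewrite invr_gt0.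
have := gibbs_ineq pr0 (fun=> ltW Ninv0) (fun _ _ => Ninv0).
rewrite sumr_const -mulr_natr mulVf ?lt0r_neq0 // sum_pr P1 subrr.
have -> : \sum_t pr P X t * (ln N^-1 - ln (pr P X t)) = - ln N + entropy P X.
  rewrite (eq_bigr (fun t => pr P X t * ln N^-1 - xlnx (pr P X t))); last first.
    by move=> t _; rewrite /xlnx; case: eqP => [->|_]; rewrite ?mul0r; ring.
  by rewrite sumrB -mulr_suml sum_pr P1 mul1r lnV ?posrE.
lra.
Qed.

End Entropy.

Section DualTotalCorrelation.
Variables (R : realType) (I V : finType) (P : {ffun I -> V} -> R).

Lemma coord_dropc_inj i : injective (fun x : {ffun I -> V} => (x i, dropc i x)).
Proof.
move=> x y [xy_i /ffunP xy_drop]; apply/ffunP => j.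
have [->//|ji] := eqVneq j i.
by have := xy_drop (exist _ j ji); rewrite !ffunE.
Qed.

Lemma condEntropy_coordE i :
  condEntropy P (fun x => x i) (dropc i) =
  \sum_x P x * (ln (pr P (dropc i) (dropc i x)) - ln (P x)).
Proof.
rewrite /condEntropy !entropyE opprK addrC -sumrB; apply: eq_bigr => x _.
by rewrite (pr_inj P (coord_dropc_inj (i := i))) mulrBr.
Qed.

Lemma dtcE : dtc P = \sum_x P x *
  (\sum_i (ln (P x) - ln (pr P (dropc i) (dropc i x))) - ln (P x)).
Proof.
rewrite /dtc entropyE (eq_bigr _ (fun i _ => condEntropy_coordE i)).
rewrite exchange_big -sumrN -sumrB; apply: eq_bigr => x _ /=.
rewrite (pr_inj P (@inj_id _)) mulrBr mulr_sumr -sumrN addrC; congr (_ - _).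
by apply: eq_bigr => i _; ring.
Qed.

End DualTotalCorrelation.

Section Mixture.
Variables (R : realType) (I V Z : finType).
Variables (mu : Z -> R) (F : Z -> I -> V -> R).
Hypothesis mu_ge0 : forall z, 0 <= mu z.
Hypotheses (F_ge0 : forall z i v, 0 <= F z i v) (F_sum1 : forall z i, \sum_v F z i v = 1).

Definition mixture (x : {ffun I -> V}) : R := \sum_z mu z * \prod_i F z i (x i).

(* joint is the law of (x, z), margin i the law of x^-i, rest i that of (x^-i, z). *)
Let joint (x : {ffun I -> V}) z := mu z * \prod_i F z i (x i).
Let margin i x := pr mixture (dropc i) (dropc i x).
Let rest i x z := mu z * \prod_(j : {j : I | j != i}) F z (val j) (dropc i x j).

Lemma joint_ge0 x z : 0 <= joint x z.
Proof. by rewrite mulr_ge0 // prodr_ge0. Qed.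

Lemma rest_ge0 i x z : 0 <= rest i x z.
Proof. by rewrite mulr_ge0 // prodr_ge0. Qed.

Lemma sum_joint z : \sum_x joint x z = mu z.
Proof. by rewrite -mulr_sumr sum_prod_ffun ?mulr1. Qed.

Lemma mixture_ge0 x : 0 <= mixture x.
Proof. by apply: sumr_ge0 => z _; apply: joint_ge0. Qed.

Lemma joint_le_mixture x z : joint x z <= mixture x.
Proof. by rewrite /mixture (bigD1 z) //= lerDl sumr_ge0 // => z' _; apply: joint_ge0. Qed.

Lemma mixture_le_margin i x : mixture x <= margin i x.
Proof.
by rewrite /margin /pr (bigD1 x) //= lerDl sumr_ge0 // => y _; apply: mixture_ge0.
Qed.

Lemma joint_coordE i x z : joint x z = F z i (x i) * rest i x z.
Proof.
rewrite /joint /rest mulrCA (bigD1 i) //=; congr (_ * (_ * _)).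
under [RHS]eq_bigr do rewrite ffunE.
exact: (big_sub [pred j | j != i]).
Qed.

Lemma ln_joint x z :
  0 < joint x z -> ln (joint x z) = ln (mu z) + \sum_i ln (F z i (x i)).
Proof.
move=> J_gt0; move: (J_gt0); rewrite lt0r mulf_eq0 negb_or => /andP[/andP[mu_n0 F_n0] _].
have F_gt0 i : 0 < F z i (x i) by rewrite lt0r F_ge0 andbT; move/prodf_neq0: F_n0; apply.
by rewrite lnM ?posrE ?ln_prod // ?prodr_gt0 // lt0r mu_n0 mu_ge0.
Qed.

Lemma sum_rest_mixture_le i z : \sum_x rest i x z * mixture x / margin i x <= mu z.
Proof.
pose c (h : {ffun {j : I | j != i} -> V}) := mu z * \prod_j F z (val j) (h j).
have sum_c : \sum_h c h = mu z.
  by rewrite -mulr_sumr (sum_prod_ffun (fun j => F_sum1 z (val j))) mulr1.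
have -> : \sum_x rest i x z * mixture x / margin i x =
    \sum_h pr mixture (dropc i) h * (c h / pr mixture (dropc i) h).
  by rewrite -sum_mul_pr; apply: eq_bigr => x _; rewrite /rest /margin /c; ring.
rewrite -sum_c; apply: ler_sum => h _.
have [->|pr_n0] := eqVneq (pr mixture (dropc i) h) 0.
  by rewrite mul0r mulr_ge0 // prodr_ge0.
by rewrite mulrCA mulfV // mulr1.
Qed.

Lemma joint_gt0_factors i x z : 0 < joint x z ->
  [/\ 0 < F z i (x i), 0 < rest i x z, 0 < mixture x & 0 < margin i x].
Proof.
move=> J_gt0; have P_gt0 := lt_le_trans J_gt0 (joint_le_mixture x z).
move: J_gt0; rewrite (joint_coordE i) lt0r mulf_eq0 negb_or => /andP[/andP[F_n0 K_n0] _].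
split; [by rewrite lt0r F_n0 F_ge0 | by rewrite lt0r K_n0 rest_ge0 | by [] |].
exact: lt_le_trans P_gt0 (mixture_le_margin i x).
Qed.

(* The sum is H(x^i | x^-i, z) - H(x^i | x^-i). *)
Lemma coord_conditioning_gap_le0 i :
  \sum_x \sum_z joint x z * (ln (mixture x) - ln (margin i x) - ln (F z i (x i))) <= 0.
Proof.
(* b is the law of (x, z) in which x^i is redrawn from its conditional law given
   x^-i, independently of z. *)
pose b x z := rest i x z * mixture x / margin i x.
have b_ge0 x z : 0 <= b x z.
  rewrite /b mulr_ge0 ?mulr_ge0 ?prodr_ge0 ?mixture_ge0 // invr_ge0.
  exact: le_trans (mixture_ge0 x) (mixture_le_margin i x).
have b_gt0 x z : 0 < joint x z -> 0 < b x z.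
  move=> /(joint_gt0_factors i)[_ K_gt0 P_gt0 D_gt0].
  by rewrite /b divr_gt0 // mulr_gt0.
have -> : \sum_x \sum_z joint x z * (ln (mixture x) - ln (margin i x) - ln (F z i (x i)))
    = \sum_x \sum_z joint x z * (ln (b x z) - ln (joint x z)).
  apply: eq_bigr => x _; apply: eq_bigr => z _.
  have [->|J_n0] := eqVneq (joint x z) 0; first by rewrite !mul0r.
  have /(joint_gt0_factors i)[F_gt0 K_gt0 P_gt0 D_gt0] : 0 < joint x z.
    by rewrite lt0r J_n0 joint_ge0.
  have KP_gt0 := mulr_gt0 K_gt0 P_gt0.
  rewrite (joint_coordE i) /b ln_div ?posrE //.
  rewrite [ln (rest i x z * _)]lnM ?posrE // [ln (_ * rest i x z)]lnM ?posrE //.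
  by congr (_ * _); ring.
have sum_b_le : \sum_x \sum_z b x z <= \sum_x \sum_z joint x z.
  rewrite exchange_big [X in _ <= X]exchange_big /=.
  by apply: ler_sum => z _; rewrite sum_joint sum_rest_mixture_le.
rewrite !pair_big /=.
apply: le_trans (gibbs_ineq (fun w => joint_ge0 w.1 w.2) (fun w => b_ge0 w.1 w.2)
  (fun w => b_gt0 w.1 w.2)) _.
by rewrite subr_le0; move: sum_b_le; rewrite !pair_big.
Qed.

(* Pointwise form of H(x) <= H(x, z). *)
Lemma joint_dtc_term_le x z :
  joint x z * (\sum_i (ln (mixture x) - ln (margin i x)) - ln (mixture x)) <=
  \sum_i joint x z * (ln (mixture x) - ln (margin i x) - ln (F z i (x i)))
  - joint x z * ln (mu z).
Proof.
have [->|J_n0] := eqVneq (joint x z) 0.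
  by rewrite mul0r big1 ?mul0r ?subrr // => i _; rewrite mul0r.
have J_gt0 : 0 < joint x z by rewrite lt0r J_n0 joint_ge0.
have P_gt0 := lt_le_trans J_gt0 (joint_le_mixture x z).
have -> : \sum_i joint x z * (ln (mixture x) - ln (margin i x) - ln (F z i (x i)))
    - joint x z * ln (mu z) =
    joint x z * (\sum_i (ln (mixture x) - ln (margin i x)) - ln (joint x z)).
  by rewrite ln_joint // -mulr_sumr -mulrBr [in LHS]sumrB; congr (_ * _); ring.
apply: ler_wpM2l; first exact: joint_ge0.
by rewrite lerD2l lerN2 ler_ln ?posrE // joint_le_mixture.
Qed.

Theorem dtc_mixture_le_entropy : dtc mixture <= entropy mu id.
Proof.
have entropy_muE : entropy mu id = - \sum_x \sum_z joint x z * ln (mu z).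
  rewrite entropyE exchange_big; congr (- _); apply: eq_bigr => z _.
  by rewrite (pr_inj mu (@inj_id _)) -mulr_suml sum_joint.
rewrite dtcE entropy_muE.
apply: le_trans (_ : \sum_x \sum_z (\sum_i joint x z *
    (ln (mixture x) - ln (margin i x) - ln (F z i (x i))) - joint x z * ln (mu z)) <= _).
  apply: ler_sum => x _; rewrite [X in X * _]/mixture mulr_suml.
  by apply: ler_sum => z _; apply: joint_dtc_term_le.
under eq_bigr do rewrite sumrB.
rewrite sumrB; suff : \sum_x \sum_z \sum_i joint x z *
    (ln (mixture x) - ln (margin i x) - ln (F z i (x i))) <= 0 by lra.
under eq_bigr do rewrite exchange_big.
by rewrite exchange_big; apply: sumr_le0 => i _; apply: coord_conditioning_gap_le0.
Qed.

End Mixture.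

Theorem proposition4 (R : realType) (n r : nat) (hr1 : (1 <= r)%N) (hrn : (r <= n)%N)
  (mu : {ffun 'I_n -> 'I_r} -> R)
  (mu_ge0 : forall z, 0 <= mu z) (mu_sum1 : \sum_z mu z = 1)
  (p q : R) (hp0 : 0 <= p) (hp1 : p <= 1) (hq0 : 0 <= q) (hq1 : q <= 1) :
  dtc (sbm_law mu p q) <= n%:R * ln (r%:R : R).
Proof.
pose F (z : {ffun 'I_n -> 'I_r}) (e : edge n) (b : bool) : R :=
  let pe := if z (val e).1 == z (val e).2 then p else q in if b then pe else 1 - pe.
have F_ge0 z e b : 0 <= F z e b by rewrite /F /=; case: b; case: ifP => _; lra.
have F_sum1 z e : \sum_b F z e b = 1 by rewrite big_bool /F /=; lra.
apply: le_trans (dtc_mixture_le_entropy mu_ge0 F_ge0 F_sum1) _.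
apply: le_trans (entropy_le_ln_card id mu_ge0 mu_sum1) _.
by rewrite card_ffun !card_ord natrX lnXn ?ltr0n // mulr_natl.
Qed.
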